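(* Let $b\ge2$ and $N\ge2$ be integers with $N$ even, let $c_j$ ($j\in\mathbb{Z}$) be given reals, let $\beta\ge0$ be an integer, and let $j\ge0$ be an index and $\Delta$ a real number. Run the following procedure (the update of an \textsc{Ola} buffer): start with a map $deltas$ (default value $0$) containing the single key $j$ with $deltas_j=\Delta$. For $s=0,1,\ldots,\beta$: let $K$ be the set of keys of $deltas$ at the start of this iteration; for each $i\in K$ such that $\lfloor i/b^s\rfloor$ is not divisible by $b$, set $\delta=deltas_i$, then for each $m=-\frac N2+1,\ldots,\frac N2$ add $c_{-bm+(\lfloor i/b^s\rfloor \bmod b)}\,\delta$ to $deltas_{(\lfloor i/b^{s+1}\rfloor+m)b^{s+1}}$, then (after possibly adding $deltas_i$ to the buffer entry $B_{i/b}$ when $b\mid i$) remove key $i$ from $deltas$. Then at the start and at the end of every iteration $s$, the map $deltas$ has at most $2N$ keys; that is, the changes are propagated from each scale to the next over at most $2N$ cells (the update dag has at most $2N$ nodes at each level).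
   Context: The \textsc{Ola} buffer is a hierarchical overlapped bin buffer over an external array, with bin size $b$, $N$ buffered moments and Lagrange coefficients $c_j$ of degree $N-1$; cells whose index is divisible by $b^{s-1}$ are said to belong to scale $s$ (scale $0$ being the external array), and higher-scale values are stored in place. The procedure above propagates the effect of changing the external-array entry $a_j$ by $\Delta$ through the scales. *)

From HB Require Import structures.
From mathcomp Require Import all_boot all_order all_algebra.
From mathcomp Require Import finmap.
From mathcomp Require Import reals.
Set Implicit Arguments. Unset Strict Implicit. Unset Printing Implicit Defensive.
Import Order.TTheory GRing.Theory Num.Theory.
Local Open Scope fset_scope.
Local Open Scope fmap_scope.
Local Open Scope ring_scope.

Definition deltas_map (R : realType) := {fmap int -> R}.

Definition dget (R : realType) (d : deltas_map R) (k : int) : R :=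
  odflt 0 d.[? k].

Definition dadd (R : realType) (d : deltas_map R) (k : int) (v : R)
  : deltas_map R := d.[k <- dget d k + v].

Definition offsets (N : nat) : seq int :=
  [seq (k%:Z - (N./2)%:Z + 1) | k <- iota 0 N].

(* processing of one key i during iteration s (floor division / mod are
   the Euclidean ones of intdiv, i.e. floor for positive divisors) *)
Definition process_key (R : realType) (b N : nat) (c : int -> R) (s : nat)
    (d : deltas_map R) (i : int) : deltas_map R :=
  let q := (i %/ (b ^ s)%:Z)%Z in
  if ~~ (b%:Z %| q)%Z then
    let delta := dget d i in
    let d' := foldl (fun d m =>
                 dadd d (((i %/ (b ^ s.+1)%:Z)%Z + m) * (b ^ s.+1)%:Z)
                      (c (- (b%:Z * m) + (q %% b%:Z)%Z) * delta))
               d (offsets N) in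
    (* (the buffer update B_{i/b} += deltas_i is a side effect on the
        buffer, irrelevant for deltas) *)
    d'.[~ i]
  else d.

Definition ola_iter (R : realType) (b N : nat) (c : int -> R) (s : nat)
    (d : deltas_map R) : deltas_map R :=
  foldl (process_key b N c s) d (enum_fset (domf d)).

Definition ola_init (R : realType) (j : int) (Delta : R) : deltas_map R :=
  [fmap].[j <- Delta].

(* state of deltas at the start of iteration s (i.e. after iterations
   0, ..., s-1) *)
Definition ola_state (R : realType) (b N : nat) (c : int -> R) (j : int)
    (Delta : R) (s : nat) : deltas_map R :=
  foldl (fun d t => ola_iter b N c t d) (ola_init j Delta) (iota 0 s).

From HB Require Import structures.
From mathcomp Require Import all_boot all_order all_algebra.
From mathcomp Require Import finmap.
From mathcomp Require Import reals.
From mathcomp Require Import zify.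
Set Implicit Arguments. Unset Strict Implicit.
Import Order.TTheory GRing.Theory Num.Theory.
Local Open Scope fset_scope.
Local Open Scope ring_scope.

(* At scale s every key of deltas has the form x * b^s with x in a window of
   2N consecutive integers starting at some L.  Processing such a key keeps
   it when b divides x (it is then (x/b) * b^(s+1)), and otherwise replaces
   it by the keys (x/b + m) * b^(s+1) with m among the N consecutive offsets
   1 - N/2, ..., N - N/2.  Since b >= 2, x/b takes at most N + 1 consecutive
   values starting at L/b, so all the new keys lie in the window of 2N
   multiples of b^(s+1) starting at (L/b + 1 - N/2) * b^(s+1), and a window
   of 2N cells holds at most 2N keys. *)

Definition scaled_window (b s : nat) (L : int) (w : nat) (k : int) : Prop :=
  exists2 x : int, k = x * (b ^ s)%:Z & L <= x < L + w%:Z.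

Lemma card_scaled_window (b s w : nat) (L : int) (A : {fset int}) :
  {in A, forall k, scaled_window b s L w k} -> (#|` A| <= w)%N.
Proof.
move=> Awin.
have sub : A `<=` [fset (L + n%:Z) * (b ^ s)%:Z | n in iota 0 w].
  apply/fsubsetP => k /Awin [x -> /andP[Lx xLw]].
  apply/imfsetP; exists `|x - L|%N; first by rewrite /= mem_iota; lia.
  congr (_ * _); lia.
apply: (leq_trans (fsubset_leq_card sub)); apply: (leq_trans (leq_imfset_card _ _ _)).
by rewrite /= (leq_trans (size_undup _)) ?size_iota.
Qed.

Lemma divz_window (b L x n : int) : 0 < b -> L <= x < L + n * b ->
  (L %/ b)%Z <= (x %/ b)%Z <= (L %/ b)%Z + n.
Proof.
move=> b_gt0 /andP[Lx xLnb]; rewrite (lez_pdiv2r (ltW b_gt0) Lx) /=.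
rewrite -ltzD1 ltz_divLR //; have := ltz_ceil L b_gt0; lia.
Qed.

Lemma mem_offsets (N : nat) (m : int) : m \in offsets N ->
  1 - (N./2)%:Z <= m <= N%:Z - (N./2)%:Z.
Proof. by case/mapP => k; rewrite mem_iota add0n => k_lt ->; lia. Qed.

Definition children (b N s : nat) (i : int) : seq int :=
  [seq ((i %/ (b ^ s.+1)%:Z)%Z + m) * (b ^ s.+1)%:Z | m <- offsets N].

Lemma domf_foldl_dadd (R : realType) (F : int -> int) (G : int -> R)
    (ms : seq int) (d : deltas_map R) (k : int) :
  k \in domf (foldl (fun d m => dadd d (F m) (G m)) d ms) ->
  k \in domf d \/ k \in map F ms.
Proof.
elim: ms d => [|m ms IH] d /=; first by left.
case/IH => [|kF]; last by right; rewrite inE kF orbT.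
rewrite /dadd dom_setf in_fset1U => /orP[/eqP->|]; last by left.
by right; rewrite inE eqxx.
Qed.

Lemma domf_process_key (R : realType) (b N : nat) (c : int -> R) (s : nat)
    (d : deltas_map R) (i k : int) :
  k \in domf (process_key b N c s d i) ->
  [\/ k \in domf d /\ k != i, k = i /\ (b%:Z %| i %/ (b ^ s)%:Z)%Z
    | k \in children b N s i].
Proof.
rewrite /process_key; case: ifPn => [_|/negPn b_dvd kd].
  rewrite domf_rem in_fsetD1 => /andP[k_i].
  by case/domf_foldl_dadd => [kd|kch]; [apply: Or31|apply: Or33].
by have [->|k_i] := eqVneq k i; [apply: Or32|apply: Or31].
Qed.

Lemma ola_stateS (R : realType) (b N : nat) (c : int -> R) (j : int) (D : R)
    (s : nat) :
  ola_state b N c j D s.+1 = ola_iter b N c s (ola_state b N c j D s).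
Proof. by rewrite /ola_state -addn1 iotaD foldl_cat. Qed.

Definition next_window_start (b N : nat) (L : int) : int :=
  (L %/ b%:Z)%Z + 1 - (N./2)%:Z.

Section OlaWindow.

Variables (b N : nat).
Hypotheses (b_ge2 : (2 <= b)%N) (N_ge2 : (2 <= N)%N).

Local Notation window s L := (scaled_window b s L (2 * N)).
Local Notation next L := (next_window_start b N L).

Lemma expn_gt0_int s : 0 < (b ^ s)%:Z.
Proof. by rewrite ltz_nat expn_gt0; case: b b_ge2. Qed.

Lemma divz_expS s x : ((x * (b ^ s)%:Z) %/ (b ^ s.+1)%:Z)%Z = (x %/ b%:Z)%Z.
Proof. by rewrite expnS PoszM divzMpr ?expn_gt0_int. Qed.

Lemma coarse_index_window (L x : int) : L <= x < L + (2 * N)%:Z ->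
  (L %/ b%:Z)%Z <= (x %/ b%:Z)%Z <= (L %/ b%:Z)%Z + N%:Z.
Proof.
have := leq_mul b_ge2 (leqnn N).
by move=> NbN xwin; apply: divz_window; lia.
Qed.

Lemma scaled_window_parent s L i : window s L i ->
  (b%:Z %| i %/ (b ^ s)%:Z)%Z -> window s.+1 (next L) i.
Proof.
case=> x -> /coarse_index_window xwin.
rewrite mulzK ?lt0r_neq0 ?expn_gt0_int // => b_dvd_x.
exists (x %/ b%:Z)%Z; first by rewrite expnS PoszM mulrA divzK.
rewrite /next_window_start; lia.
Qed.

Lemma scaled_window_children s L i k : window s L i ->
  k \in children b N s i -> window s.+1 (next L) k.
Proof.
case=> x -> /coarse_index_window xwin /mapP[m /mem_offsets m_bounds ->].
exists ((x %/ b%:Z)%Z + m); first by rewrite divz_expS.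
rewrite /next_window_start; lia.
Qed.

Variables (R : realType) (c : int -> R).

Lemma scaled_window_foldl_process_key s L (r : seq int) (d : deltas_map R) :
  {in r, forall i, window s L i} ->
  {in domf d, forall k, window s.+1 (next L) k \/ k \in r} ->
  {in domf (foldl (process_key b N c s) d r), forall k, window s.+1 (next L) k}.
Proof.
elim: r d => [|i r IH] d rwin dwin /=; first by move=> k /dwin [].
have iwin : window s L i by apply: rwin; rewrite inE eqxx.
apply: IH => [k kr|k]; first by apply: rwin; rewrite inE kr orbT.
case/domf_process_key => [[/dwin [kwin|kir] k_i]|[-> b_dvd]|kch].
- by left.
- by right; move: kir; rewrite inE (negbTE k_i).
- by left; apply: scaled_window_parent.
- by left; apply: scaled_window_children kch.
Qed.

Lemma scaled_window_ola_iter s L (d : deltas_map R) :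
  {in domf d, forall k, window s L k} ->
  {in domf (ola_iter b N c s d), forall k, window s.+1 (next L) k}.
Proof.
by move=> dwin; apply: scaled_window_foldl_process_key => k kd; [apply: dwin|right].
Qed.

Lemma scaled_window_ola_state (j : int) (D : R) s :
  exists L, {in domf (ola_state b N c j D s), forall k, window s L k}.
Proof.
elim: s => [|s [L Lwin]]; last first.
  by exists (next L); rewrite ola_stateS; apply: scaled_window_ola_iter.
exists j => k; rewrite in_fset1U orbF => /eqP ->.
by exists j; rewrite ?expn0 ?mulr1 //; lia.
Qed.

End OlaWindow.

Theorem proposition5 (R : realType) (b N : nat) (c : int -> R) (beta : nat)
    (j : nat) (Delta : R) :
  (2 <= b)%N -> (2 <= N)%N -> ~~ odd N ->
  forall s : nat, (s <= beta)%N ->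
    (#|` domf (ola_state b N c j%:Z Delta s)| <= 2 * N)%N /\
    (#|` domf (ola_iter b N c s (ola_state b N c j%:Z Delta s))| <= 2 * N)%N.
Proof.
move=> b_ge2 N_ge2 _ s _.
have [L Lwin] := scaled_window_ola_state b_ge2 N_ge2 c j%:Z Delta s.
split; first exact: card_scaled_window Lwin.
exact/card_scaled_window/(scaled_window_ola_iter b_ge2 N_ge2 Lwin).
Qed.
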